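(* Let $L(\mathbf{w})=\frac1n\sum_{k=1}^Kn_kL_k(\mathbf{w})$ be the global loss over $K$ devices with $n_k\ge1$ samples, $n=\sum_kn_k$, with $\mathbf{w}^*$ its optimal model. Assume (i) $\nabla L$ is Lipschitz continuous with modulus $\ell>0$, and (ii) $L$ is $\mu$-strongly convex with $\mu>0$: $L(\mathbf{u})\ge L(\mathbf{v})+\nabla L(\mathbf{v})^\top(\mathbf{u}-\mathbf{v})+\frac\mu2\|\mathbf{u}-\mathbf{v}\|^2$ for all $\mathbf{u},\mathbf{v}$. Starting from $\mathbf{w}^1$, in each round $i=1,2,\dots$ let $\mathbf{g}_k^i=\nabla L_k(\mathbf{w}^i)$ (assumed nonzero), draw a device $X^i$ with probabilities $$p_k^{i*}=\frac{n_k}{n}\|\mathbf{g}_k^i\|\sqrt{\frac{\rho}{(1-\rho)T_k^{\mathrm{U},i}+\lambda^{i*}}},$$ where $\rho\in(0,1]$, $T_k^{\mathrm{U},i}=\frac{qS}{B\log_2(1+\gamma_k^i)}$ and $\lambda^{i*}$ is chosen so that $\sum_kp_k^{i*}=1$, and update $\mathbf{w}^{i+1}=\mathbf{w}^i-\eta^i\frac{n_{X^i}}{np^{i*}_{X^i}}\mathbf{g}^i_{X^i}$ with learning rates $0<\eta^i<\frac1{2\mu}$. Then for every $t\ge1$, $$\mathbb{E}\{L(\mathbf{w}^{t+1})-L(\mathbf{w}^* )\}\le\prod_{i=1}^t(1-2\mu\eta^i)\,\mathbb{E}\{L(\mathbf{w}^1)-L(\mathbf{w}^* )\}+\frac{\ell}{2n}\sum_{i=1}^tA^i(\eta^i)^2\sum_{k=1}^Kn_k\|\mathbf{g}_k^i\|\sqrt{\frac{(1-\rho)T_k^{\mathrm{U},i}+\lambda^{i*}}{\rho}},$$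 where $A^i=\prod_{j=i+1}^t(1-2\mu\eta^j)$.
   Context: $S$ is the number of model parameters, $q$ the number of bits per gradient element, $B$ the system bandwidth, $\gamma_k^i>0$ the uplink SNR of device $k$ in round $i$; $T_k^{\mathrm{U},i}$ is device $k$'s gradient upload latency. The probabilities $p_k^{i*}$ are the importance- and channel-aware scheduling policy minimizing, over distributions $(p_k)$, $\sum_k p_k\big(\rho\|\frac{n_k}{np_k}\mathbf{g}_k^i-\nabla L(\mathbf{w}^i)\|^2+(1-\rho)T_k^i\big)$, with $T_k^i$ the one-round latency when device $k$ is scheduled. *)

From HB Require Import structures.
From mathcomp Require Import all_boot all_order all_algebra.
From mathcomp Require Import all_classical all_reals all_analysis.
Set Implicit Arguments. Unset Strict Implicit. Unset Printing Implicit Defensive.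
Import Order.TTheory GRing.Theory Num.Theory.
Import numFieldNormedType.Exports.
Local Open Scope ring_scope.

Section FL.
Variable R : realType.

Definition dotv (d : nat) (u v : 'rV[R]_d) : R := \sum_(j < d) u 0 j * v 0 j.
Definition enorm (d : nat) (u : 'rV[R]_d) : R := Num.sqrt (dotv u u).

Definition is_gradient (d : nat) (f : 'rV[R]_d -> R) (g : 'rV[R]_d -> 'rV[R]_d) :=
  forall w, differentiable f w /\ forall v, 'd f w v = dotv (g w) v.

Definition log2 (x : R) : R := ln x / ln 2.

Definition upload_latency (q S B gamma : R) : R := q * S / (B * log2 (1 + gamma)).

(* Trajectory of the (random) iterates as a function of the history of
   scheduled devices h = [:: X^1; ...; X^m]; returns w^{m+1}.
   step i w x = w^{i+1} when w^i = w and X^i = x. *)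
Definition traj (d K : nat) (step : nat -> 'rV[R]_d -> 'I_K -> 'rV[R]_d)
    (w1 : 'rV[R]_d) (h : seq 'I_K) : 'rV[R]_d :=
  (foldl (fun (s : nat * 'rV[R]_d) x => (s.1.+1, step s.1 s.2 x)) (1%N, w1) h).2.

(* Probability of the history h: prod_i P i w^i X^i, where P i w k is the
   probability of scheduling device k in round i when the model is w. *)
Definition hprob (d K : nat) (P : nat -> 'rV[R]_d -> 'I_K -> R)
    (step : nat -> 'rV[R]_d -> 'I_K -> 'rV[R]_d)
    (w1 : 'rV[R]_d) (h : seq 'I_K) : R :=
  (foldl (fun (s : nat * 'rV[R]_d * R) x =>
            (s.1.1.+1, step s.1.1 s.1.2 x, s.2 * P s.1.1 s.1.2 x))
         (1%N, w1, 1) h).2.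

(* Expectation of F(w^{m+1}) (F may depend on w^{m+1} only), where the
   expectation is over the scheduling decisions X^1..X^m. *)
Definition expect (d K : nat) (P : nat -> 'rV[R]_d -> 'I_K -> R)
    (step : nat -> 'rV[R]_d -> 'I_K -> 'rV[R]_d)
    (w1 : 'rV[R]_d) (m : nat) (F : 'rV[R]_d -> R) : R :=
  \sum_(h : m.-tuple 'I_K) hprob P step w1 h * F (traj step w1 h).

End FL.

(* Smoothness of L bounds one step w - r g_x by L w - r <grad L w, g_x> + ell r^2 |g_x|^2 / 2.
   Averaging over the scheduled device x ~ p, the choice p_x r_x = eta n_x / n makes the
   linear terms add up to -eta |grad L w|^2, and strong convexity (through the
   Polyak-Lojasiewicz inequality |grad L w|^2 >= 2 mu (L w - L wstar)) turns this into a
   contraction by 1 - 2 mu eta.  For the policy p*, the second-order term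
   sum_x p_x r_x^2 |g_x|^2 equals (eta^2 / n) sum_k n_k |g_k| sqrt(((1 - rho) T_k + lambda) / rho).
   Conditioning the expectation over schedules on the last round gives the linear recursion
   e_(i+1) <= (1 - 2 mu eta^(i+1)) e_i + b_(i+1), which unrolls to the bound. *)

From HB Require Import structures.
From mathcomp Require Import all_boot all_order all_algebra.
From mathcomp Require Import all_classical all_reals all_analysis.
From mathcomp Require Import lra ring.
Import Order.TTheory GRing.Theory Num.Theory.
Import numFieldNormedType.Exports.
Local Open Scope ring_scope.

Set Implicit Arguments.
Unset Strict Implicit.
Unset Printing Implicit Defensive.

Section inner_product.
Variables (R : realType) (d : nat).
Implicit Types u v w : 'rV[R]_d.

Lemma dotvC u v : dotv u v = dotv v u.
Proof. by apply: eq_bigr => j _; rewrite mulrC. Qed.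

Lemma dotvDl u v w : dotv (u + v) w = dotv u w + dotv v w.
Proof. by rewrite /dotv -big_split; apply: eq_bigr => j _; rewrite mxE mulrDl. Qed.

Lemma dotvZl (a : R) u w : dotv (a *: u) w = a * dotv u w.
Proof. by rewrite /dotv mulr_sumr; apply: eq_bigr => j _; rewrite mxE mulrA. Qed.

Lemma dotv0l w : dotv 0 w = 0.
Proof. by rewrite /dotv big1 // => j _; rewrite mxE mul0r. Qed.

Lemma dotv0r w : dotv w 0 = 0.
Proof. by rewrite dotvC dotv0l. Qed.

Lemma dotvBl u v w : dotv (u - v) w = dotv u w - dotv v w.
Proof. by rewrite dotvDl -scaleN1r dotvZl mulN1r. Qed.

Lemma dotvDr u v w : dotv w (u + v) = dotv w u + dotv w v.
Proof. by rewrite dotvC dotvDl !(dotvC w). Qed.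

Lemma dotvZr (a : R) u w : dotv w (a *: u) = a * dotv w u.
Proof. by rewrite dotvC dotvZl dotvC. Qed.

Lemma dotvBr u v w : dotv w (u - v) = dotv w u - dotv w v.
Proof. by rewrite !(dotvC w) dotvBl. Qed.

Lemma dotv_suml (I : finType) (F : I -> 'rV[R]_d) w :
  dotv (\sum_i F i) w = \sum_i dotv (F i) w.
Proof.
rewrite /dotv exchange_big /=; apply: eq_bigr => j _.
by rewrite summxE mulr_suml.
Qed.

Lemma dotv_sumr (I : finType) (F : I -> 'rV[R]_d) w :
  dotv w (\sum_i F i) = \sum_i dotv w (F i).
Proof. by rewrite dotvC dotv_suml; apply: eq_bigr => i _; rewrite dotvC. Qed.

Lemma dotv_ge0 u : 0 <= dotv u u.
Proof. by apply: sumr_ge0 => j _; rewrite -expr2 sqr_ge0. Qed.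

Lemma sqr_enorm u : enorm u ^+ 2 = dotv u u.
Proof. by rewrite sqr_sqrtr // dotv_ge0. Qed.

Lemma enorm_ge0 u : 0 <= enorm u.
Proof. exact: sqrtr_ge0. Qed.

Lemma enorm_eq0 u : (enorm u == 0) = (u == 0).
Proof.
apply/idP/eqP => [|->]; last by rewrite /enorm dotv0l sqrtr0.
rewrite sqrtr_eq0 le_eqVlt ltNge dotv_ge0 orbF psumr_eq0 => [/allP u0|j _]; last first.
  by rewrite -expr2 sqr_ge0.
apply/rowP => j; apply/eqP; rewrite mxE -sqrf_eq0 expr2.
exact: u0 (mem_index_enum _).
Qed.

Lemma enorm_gt0 u : (0 < enorm u) = (u != 0).
Proof. by rewrite lt_def enorm_eq0 enorm_ge0 andbT. Qed.

Lemma enormZ (a : R) u : 0 <= a -> enorm (a *: u) = a * enorm u.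
Proof.
move=> a0; rewrite /enorm dotvZl dotvZr mulrA sqrtrM ?mulr_ge0 //.
by rewrite -expr2 sqrtr_sqr ger0_norm.
Qed.

Lemma dotv_le_enorm u v : dotv u v <= enorm u * enorm v.
Proof.
have [->|u0] := eqVneq u 0; first by rewrite dotv0l /enorm dotv0l sqrtr0 mul0r.
have [->|v0] := eqVneq v 0; first by rewrite dotv0r /enorm dotv0r sqrtr0 mulr0.
have uv_gt0 : 0 < enorm u * enorm v by rewrite mulr_gt0 ?enorm_gt0.
have := dotv_ge0 (enorm v *: u - enorm u *: v).
rewrite !(dotvBl, dotvBr, dotvZl, dotvZr) (dotvC v u) -!sqr_enorm => sq_ge0.
rewrite -subr_ge0 -(pmulr_rge0 _ uv_gt0); nra.
Qed.

End inner_product.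

Section smooth_strongly_convex.
Variables (R : realType) (d : nat).
Implicit Types (f : 'rV[R]_d -> R) (g : 'rV[R]_d -> 'rV[R]_d).

Definition line_gradient f g := forall v h (s : R),
  is_derive s 1 (fun s => f (v + s *: h)) (dotv (g (v + s *: h)) h).

Lemma is_gradient_line_gradient f g : is_gradient f g -> line_gradient f g.
Proof.
move=> fg v h s; have [df dfE] := fg (v + s *: h).
have shiftE : (fun t : R => t^-1 *: (((fun s => f (v + s *: h)) \o shift s) (t *: 1)
                                    - f (v + s *: h)))
            = (fun t : R => t^-1 *: ((f \o shift (v + s *: h)) (t *: h) - f (v + s *: h))).
  apply: funext => t /=; congr (_ *: (f _ - _)).
  by rewrite /shift scaler1 scalerDl addrCA addrC.
apply: DeriveDef; first by rewrite /derivable shiftE; exact: diff_derivable.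
by rewrite /derive shiftE -/(derive f _ _) deriveE // dfE.
Qed.

Lemma line_gradient_lincomb (I : finType) (a : R) (c : I -> R)
    (f : I -> 'rV[R]_d -> R) (g : I -> 'rV[R]_d -> 'rV[R]_d) :
  (forall k, line_gradient (f k) (g k)) ->
  line_gradient (fun w => a * \sum_k c k * f k w) (fun w => a *: \sum_k c k *: g k w).
Proof.
move=> fg v h s.
have -> : (fun s : R => a * \sum_k c k * f k (v + s *: h))
        = a \*: \sum_k (c k \*: (fun s : R => f k (v + s *: h))).
  by apply: funext => s'; rewrite /= fct_sumE.
have dsum : is_derive s 1 (\sum_k c k \*: (fun s : R => f k (v + s *: h)))
                       (\sum_k c k *: dotv (g k (v + s *: h)) h).
  elim/big_ind2 : _ => [|? ? ? ? ? ?|k _]; [exact: is_derive_cst|exact: is_deriveD|].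
  by apply: is_deriveZ; exact: fg.
apply: is_derive_eq.
rewrite dotvZl dotv_suml; congr (_ * _); apply: eq_bigr => k _.
by rewrite dotvZl.
Qed.

(* s |-> f (v + s h) - s <g v, h> - s^2 ell |h|^2 / 2 is nonincreasing on [0, 1]:
   by Cauchy-Schwarz and the Lipschitz bound, its derivative is nonpositive. *)
Lemma smooth_upper_bound f g (ell : R) v h :
  line_gradient f g -> 0 <= ell ->
  (forall u w, enorm (g u - g w) <= ell * enorm (u - w)) ->
  f (v + h) <= f v + dotv (g v) h + ell / 2 * enorm h ^+ 2.
Proof.
move=> fg ell0 glip.
pose F := (fun s : R => f (v + s *: h)) - dotv (g v) h \*: @id R
          - (ell / 2 * dotv h h) \*: (@id R ^+ 2).
have dF (s : R) : is_derive s (1 : R) F (dotv (g (v + s *: h)) h - dotv (g v) h *: 1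
                             - (ell / 2 * dotv h h) *: ((2%:R * s ^+ 1) *: 1)).
  have fgs := fg v h s; exact: is_deriveB.
have F_nincr : {in `[0, 1] &, {homo F : x y /~ x <= y}}.
  apply: ler0_derive1_le_cc => [s _|s|]; first by have [] := dF s.
    rewrite in_itv /= => /andP[s0 s1].
    rewrite derive1E (@derive_val _ _ _ _ _ _ _ (dF s)) /GRing.scale /= !mulr1 expr1.
    have g_lip := glip (v + s *: h) v.
    rewrite addrAC subrr add0r (enormZ _ (ltW s0)) in g_lip.
    have CS := dotv_le_enorm (g (v + s *: h) - g v) h.
    rewrite dotvBl -sqr_enorm in CS *.
    have := enorm_ge0 h; have := enorm_ge0 (g (v + s *: h) - g v); nra.
  by apply: derivable_within_continuous => s _; have [] := dF s.
have FE (s : R) : F s = f (v + s *: h) - dotv (g v) h * s - ell / 2 * dotv h h * s ^+ 2 by [].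
have := F_nincr 1 0; rewrite !in_itv /= ler01 !lexx => /(_ isT isT isT).
rewrite !FE scale0r scale1r addr0 expr0n expr1n /= !mulr0 !mulr1 !subr0 sqr_enorm.
lra.
Qed.

Lemma strongly_convex_PL f g (mu : R) wstar w : 0 < mu ->
  (forall u v, f v + dotv (g v) (u - v) + mu / 2 * enorm (u - v) ^+ 2 <= f u) ->
  2 * mu * (f w - f wstar) <= dotv (g w) (g w).
Proof.
move=> mu0 /(_ wstar w); rewrite sqr_enorm; move: (wstar - w) => z SC.
have := dotv_ge0 (g w + mu *: z).
rewrite !(dotvDl, dotvDr, dotvZl, dotvZr) (dotvC z); nra.
Qed.

End smooth_strongly_convex.

Lemma sgd_step_expected_gap (R : realType) (d : nat) (I : finType)
    (f : 'rV[R]_d -> R) (g : 'rV[R]_d -> 'rV[R]_d) (G : I -> 'rV[R]_d)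
    (c p r : I -> R) (ell mu eta : R) (w wstar : 'rV[R]_d) :
  (forall v h, f (v + h) <= f v + dotv (g v) h + ell / 2 * enorm h ^+ 2) ->
  2 * mu * (f w - f wstar) <= dotv (g w) (g w) ->
  g w = \sum_x c x *: G x ->
  (forall x, 0 < p x) -> \sum_x p x = 1 ->
  (forall x, p x * r x = eta * c x) -> 0 <= eta ->
  \sum_x p x * (f (w - r x *: G x) - f wstar)
    <= (1 - 2 * mu * eta) * (f w - f wstar)
       + ell / 2 * \sum_x p x * r x ^+ 2 * dotv (G x) (G x).
Proof.
move=> smooth PL gE p_gt0 p_sum1 prE eta0.
have term x : p x * (f (w - r x *: G x) - f wstar)
    <= p x * (f w - f wstar) - eta * c x * dotv (g w) (G x)
       + ell / 2 * (p x * r x ^+ 2 * dotv (G x) (G x)).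
  have := smooth w ((- r x) *: G x).
  rewrite sqr_enorm !(dotvZl, dotvZr) scaleNr -(prE x).
  have := p_gt0 x; nra.
apply: le_trans (ler_sum _ (fun x _ => term x)) _.
rewrite !big_split /= -mulr_suml p_sum1 mul1r sumrN -mulr_sumr.
have -> : \sum_x eta * c x * dotv (g w) (G x) = eta * dotv (g w) (g w).
  rewrite [X in dotv _ X]gE dotv_sumr mulr_sumr; apply: eq_bigr => x _.
  by rewrite dotvZr mulrA.
nra.
Qed.

Lemma big_tuple_rcons (V : nmodType) (I : finType) (m : nat) (F : m.+1.-tuple I -> V) :
  \sum_(t : m.+1.-tuple I) F t = \sum_(t : m.-tuple I) \sum_x F [tuple of rcons t x].
Proof.
pose split_last (u : m.+1.-tuple I) : m.-tuple I * I :=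
  ([tuple of belast (thead u) (behead u)], last (thead u) (behead u)).
have rconsK : cancel (fun tx : m.-tuple I * I => [tuple of rcons tx.1 tx.2]) split_last.
  move=> [t x]; rewrite /split_last.
  have : thead [tuple of rcons t x] :: behead [tuple of rcons t x] = rcons t x.
    by rewrite -[RHS]/(val [tuple of rcons t x]) {3}(tuple_eta [tuple of rcons t x]).
  rewrite lastI => /rcons_inj [belastE lastE].
  by congr (_, _) => //; apply: val_inj; rewrite /= belastE.
have split_lastK : cancel split_last (fun tx => [tuple of rcons tx.1 tx.2]).
  by move=> u; apply: val_inj; rewrite /= -lastI {3}(tuple_eta u).
rewrite (reindex (fun tx : m.-tuple I * I => [tuple of rcons tx.1 tx.2])) /=.
  by rewrite -(pair_bigA _ (fun (t : m.-tuple I) x => F [tuple of rcons t x])).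
by exists split_last => ? _.
Qed.

Section expectation.
Variables (R : realType) (d K : nat).
Variables (P : nat -> 'rV[R]_d -> 'I_K -> R) (step : nat -> 'rV[R]_d -> 'I_K -> 'rV[R]_d).
Variable w1 : 'rV[R]_d.

Let traj_step (s : nat * 'rV[R]_d) x := (s.1.+1, step s.1 s.2 x).
Let hprob_step (s : nat * 'rV[R]_d * R) x :=
  (s.1.1.+1, step s.1.1 s.1.2 x, s.2 * P s.1.1 s.1.2 x).

Lemma foldl_traj_step_round h k w : (foldl traj_step (k, w) h).1 = (k + size h)%N.
Proof. by elim: h k w => [|x h IH] k w /=; rewrite ?addn0 // IH addSnnS. Qed.

Lemma foldl_hprob_step_state h k w a :
  (foldl hprob_step (k, w, a) h).1 = foldl traj_step (k, w) h.
Proof. by elim: h k w a => [|x h IH] k w a //=; rewrite IH. Qed.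

Lemma traj_rcons h x :
  traj step w1 (rcons h x) = step (size h).+1 (traj step w1 h) x.
Proof. by rewrite /traj foldl_rcons -/traj_step /= foldl_traj_step_round add1n. Qed.

Lemma hprob_rcons h x :
  hprob P step w1 (rcons h x) = hprob P step w1 h * P (size h).+1 (traj step w1 h) x.
Proof.
rewrite /hprob foldl_rcons -/hprob_step /=.
have := foldl_hprob_step_state h 1 w1 1.
case: (foldl hprob_step (1%N, w1, 1) h) => [[k w] a] /= kwE.
have -> : k = (size h).+1 by rewrite -[k]/((k, w).1) kwE foldl_traj_step_round add1n.
by have -> : w = traj step w1 h by rewrite /traj -/traj_step -kwE.
Qed.

Hypothesis P_ge0 : forall i w x, 0 <= P i w x.

Lemma hprob_ge0 h : 0 <= hprob P step w1 h.
Proof.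
elim/last_ind: h => [|h x IH]; first by rewrite /hprob /=.
by rewrite hprob_rcons mulr_ge0.
Qed.

Lemma expect0 F : expect P step w1 0 F = F w1.
Proof.
rewrite /expect (big_pred1 [tuple]) /=; first by rewrite /hprob /traj /= mul1r.
by move=> t; apply/esym/eqP/val_inj; case: t => -[].
Qed.

Lemma expectS m F : expect P step w1 m.+1 F =
  expect P step w1 m (fun w => \sum_x P m.+1 w x * F (step m.+1 w x)).
Proof.
rewrite /expect big_tuple_rcons; apply: eq_bigr => h _; rewrite mulr_sumr.
by apply: eq_bigr => x _; rewrite hprob_rcons traj_rcons size_tuple mulrA.
Qed.

Lemma ler_expect m F1 F2 :
  (forall h : m.-tuple 'I_K, F1 (traj step w1 h) <= F2 (traj step w1 h)) ->
  expect P step w1 m F1 <= expect P step w1 m F2.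
Proof. by move=> F12; apply: ler_sum => h _; rewrite ler_wpM2l ?hprob_ge0. Qed.

Lemma expect_lincomb m F1 F2 (a b : R) :
  expect P step w1 m (fun w => a * F1 w + b * F2 w) =
  a * expect P step w1 m F1 + b * expect P step w1 m F2.
Proof. by rewrite /expect !mulr_sumr -big_split; apply: eq_bigr => h _ /=; ring. Qed.

End expectation.

Lemma unroll_linear_recursion (R : realFieldType) (e a b : nat -> R) :
  (forall m, 0 <= a m.+1) -> (forall m, e m.+1 <= a m.+1 * e m + b m.+1) ->
  forall t, e t <= (\prod_(1 <= i < t.+1) a i) * e 0%N
                   + \sum_(1 <= i < t.+1) (\prod_(i.+1 <= j < t.+1) a j) * b i.
Proof.
move=> a_ge0 rec; elim=> [|m IH]; first by rewrite !big_geq // mul1r addr0.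
apply: le_trans (rec m) _.
rewrite big_nat_recr //= [in X in _ <= _ + X]big_nat_recr //=.
rewrite [\prod_(m.+2 <= j < m.+2) _]big_geq // mul1r.
have -> : \sum_(1 <= i < m.+1) (\prod_(i.+1 <= j < m.+2) a j) * b i
        = a m.+1 * \sum_(1 <= i < m.+1) (\prod_(i.+1 <= j < m.+1) a j) * b i.
  rewrite mulr_sumr; apply: eq_big_nat => i /andP[_ im].
  by rewrite (big_nat_recr _ _ _ im) /= mulrAC mulrC.
have := ler_wpM2l (a_ge0 m) IH; lra.
Qed.

Lemma importance_sgd_step_gap (R : realType) (d : nat) (I : finType)
    (f : 'rV[R]_d -> R) (g : 'rV[R]_d -> 'rV[R]_d) (G : I -> 'rV[R]_d)
    (a c : I -> R) (N rho ell mu eta : R) (w wstar : 'rV[R]_d) :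
  let p x := a x / N * enorm (G x) * Num.sqrt (rho / c x) in
  (forall v h, f (v + h) <= f v + dotv (g v) h + ell / 2 * enorm h ^+ 2) ->
  2 * mu * (f w - f wstar) <= dotv (g w) (g w) ->
  g w = N^-1 *: \sum_x a x *: G x ->
  0 <= N -> 0 < rho -> (forall x, 0 < a x) -> (forall x, G x != 0) ->
  (forall x, 0 < c x) -> \sum_x p x = 1 -> 0 <= eta ->
  \sum_x p x * (f (w - (eta * (a x / (N * p x))) *: G x) - f wstar)
    <= (1 - 2 * mu * eta) * (f w - f wstar)
       + ell / (2 * N) * eta ^+ 2 * \sum_x a x * enorm (G x) * Num.sqrt (c x / rho).
Proof.
move=> p smooth PL gE N_ge0 rho_gt0 a_gt0 G_neq0 c_gt0 p_sum1 eta_ge0.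
have N_gt0 : 0 < N.
  (* with [N = 0], [N^-1 = 0] would make every [p x] vanish *)
  rewrite lt_def N_ge0 andbT; apply/eqP => N0; move: p_sum1.
  rewrite /p N0 invr0 big1 => [/eqP|x _]; first by rewrite eq_sym oner_eq0.
  by rewrite mulr0 !mul0r.
have s_gt0 x : 0 < Num.sqrt (rho / c x) by rewrite sqrtr_gt0 divr_gt0.
have p_gt0 x : 0 < p x by rewrite !mulr_gt0 ?invr_gt0 ?enorm_gt0.
have gE' : g w = \sum_x (a x / N) *: G x.
  by rewrite gE scaler_sumr; apply: eq_bigr => x _; rewrite scalerA mulrC.
apply: le_trans (sgd_step_expected_gap smooth PL gE' p_gt0 p_sum1 _ eta_ge0) _.
  by move=> x; field; rewrite !gt_eqF.
rewrite lerD2l !mulr_sumr le_eqVlt; apply/orP; left.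
apply/eqP/eq_bigr => x _; rewrite -sqr_enorm /p -(invf_div rho) sqrtrV ?divr_ge0 ?ltW //.
have := s_gt0 x; have := enorm_gt0 (G x); rewrite G_neq0 => G_gt0 _.
by field; rewrite !gt_eqF.
Qed.

Theorem theorem2 (R : realType) (d K : nat)
    (ns : 'I_K -> nat) (Lk : 'I_K -> 'rV[R]_d -> R)
    (Gk : 'I_K -> 'rV[R]_d -> 'rV[R]_d)
    (ell mu rho q B : R) (gamma : nat -> 'I_K -> R)
    (eta : nat -> R) (lam : nat -> 'rV[R]_d -> R)
    (w1 wstar : 'rV[R]_d) :
  let n : nat := (\sum_(k < K) ns k)%N in
  let L : 'rV[R]_d -> R := fun w => n%:R^-1 * \sum_(k < K) (ns k)%:R * Lk k w in
  let gradL : 'rV[R]_d -> 'rV[R]_d :=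
    fun w => n%:R^-1 *: \sum_(k < K) (ns k)%:R *: Gk k w in
  let TU : nat -> 'I_K -> R :=
    fun i k => upload_latency q d%:R B (gamma i k) in
  let pstar : nat -> 'rV[R]_d -> 'I_K -> R :=
    fun i w k => (ns k)%:R / n%:R * enorm (Gk k w) *
                 Num.sqrt (rho / ((1 - rho) * TU i k + lam i w)) in
  let step : nat -> 'rV[R]_d -> 'I_K -> 'rV[R]_d :=
    fun i w x => w - (eta i * ((ns x)%:R / (n%:R * pstar i w x))) *: Gk x w in
  let E := expect pstar step w1 in
  (forall k, (0 < ns k)%N) ->
  (forall k, is_gradient (Lk k) (Gk k)) ->
  (* optimal model *)
  (forall w, L wstar <= L w) ->
  (* (i) Lipschitz gradient *)
  0 < ell ->
  (forall u v, enorm (gradL u - gradL v) <= ell * enorm (u - v)) ->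
  (* (ii) strong convexity *)
  0 < mu ->
  (forall u v, L u >= L v + dotv (gradL v) (u - v) + mu / 2 * enorm (u - v) ^+ 2) ->
  0 < rho <= 1 ->
  (0 < q) -> (0 < B) ->
  (forall i k, 0 < gamma i k) ->
  (forall i, (0 < i)%N -> 0 < eta i < 1 / (2 * mu)) ->
  (* along every history h (of length i-1) reaching w^i = traj step w1 h:
     nonzero local gradients, and lambda^{i*} is chosen so that the
     p_k^{i*} are well defined and sum to one *)
  (forall h : seq 'I_K,
     let i := (size h).+1 in let w := traj step w1 h in
     (forall k, Gk k w != 0) /\
     (forall k, 0 < (1 - rho) * TU i k + lam i w) /\
     \sum_(k < K) pstar i w k = 1) ->
  forall t : nat, (0 < t)%N ->
  E t (fun w => L w - L wstar) <=
    (\prod_(1 <= i < t.+1) (1 - 2 * mu * eta i)) * (L w1 - L wstar)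
    + ell / (2 * n%:R) *
      \sum_(1 <= i < t.+1)
        (\prod_(i.+1 <= j < t.+1) (1 - 2 * mu * eta j)) * eta i ^+ 2 *
        E i.-1 (fun w => \sum_(k < K) (ns k)%:R * enorm (Gk k w) *
                 Num.sqrt (((1 - rho) * TU i k + lam i w) / rho)).
Proof.
move=> n L gradL TU pstar step E ns_gt0 Lk_grad _ ell_gt0 gradL_lip mu_gt0 L_sconvex
  /andP[rho_gt0 _] _ _ _ eta_bound histories t _.
pose S i w := \sum_(k < K) (ns k)%:R * enorm (Gk k w) *
                Num.sqrt (((1 - rho) * TU i k + lam i w) / rho).
have L_smooth v h : L (v + h) <= L v + dotv (gradL v) h + ell / 2 * enorm h ^+ 2.
  apply: smooth_upper_bound (ltW ell_gt0) gradL_lip.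
  exact: line_gradient_lincomb (fun k => is_gradient_line_gradient (Lk_grad k)).
have L_PL w : 2 * mu * (L w - L wstar) <= dotv (gradL w) (gradL w).
  exact: strongly_convex_PL mu_gt0 L_sconvex.
have contraction_ge0 i : 0 <= 1 - 2 * mu * eta i.+1.
  have /andP[_] := eta_bound i.+1 isT.
  by rewrite ltr_pdivlMr ?mulr_gt0 // subr_ge0 mulrC => /ltW.
have step_gap m (h : m.-tuple 'I_K) (w := traj step w1 h) :
    \sum_x pstar m.+1 w x * (L (step m.+1 w x) - L wstar)
    <= (1 - 2 * mu * eta m.+1) * (L w - L wstar) + ell / (2 * n%:R) * eta m.+1 ^+ 2 * S m.+1 w.
  have [G_neq0 [den_gt0 pstar_sum1]] := histories h.
  rewrite /= size_tuple -/w in G_neq0 den_gt0 pstar_sum1.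
  apply: (importance_sgd_step_gap (G := fun x => Gk x w) (a := fun x => (ns x)%:R)
            (c := fun x => (1 - rho) * TU m.+1 x + lam m.+1 w)) => //.
  - by move=> x; rewrite ltr0n.
  - by have /andP[/ltW] := eta_bound m.+1 isT.
have pstar_ge0 i w x : 0 <= pstar i w x.
  by rewrite !mulr_ge0 ?divr_ge0 ?ler0n ?enorm_ge0 ?sqrtr_ge0.
have gap_rec m : E m.+1 (fun w => L w - L wstar) <= (1 - 2 * mu * eta m.+1) *
    E m (fun w => L w - L wstar) + ell / (2 * n%:R) * (eta m.+1 ^+ 2 * E m (S m.+1)).
  rewrite /E expectS mulrA -expect_lincomb.
  by apply: (ler_expect pstar_ge0) => h; exact: step_gap.
apply: le_trans (unroll_linear_recursion
  (e := fun m => E m (fun w => L w - L wstar)) (a := fun i => 1 - 2 * mu * eta i)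
  (b := fun i => ell / (2 * n%:R) * (eta i ^+ 2 * E i.-1 (S i))) contraction_ge0 gap_rec t) _.
rewrite /E /S expect0 lerD2l mulr_sumr le_eqVlt; apply/orP; left.
by apply/eqP/eq_bigr => i _; ring.
Qed.
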